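(* For all positive integers $d$ and $q$, there exists a connected graph $G$ with $\mathrm{diam}(G)=d$ and \[ \Delta(G)=\begin{cases} 2^{q}-1, & \text{if } d=1,\\ 2^{q}, & \text{if } d=2,\\ 2^{q}+1, & \text{if } d\geq 3,\end{cases} \] such that $G$ admits an interval edge coloring (i.e. $G\in\mathfrak{N}$) and \[ W(G)\geq \begin{cases} (d+1)(\Delta(G)-1)-q+2, & \text{if } d=1,\\ (d+1)(\Delta(G)-1)-q+1, & \text{if } d=2,\\ (d+1)(\Delta(G)-1)-q-2, & \text{if } d\geq 3.\end{cases} \]
   Context: All graphs are finite, undirected, without loops or multiple edges. $\Delta(G)$ denotes the maximum degree of $G$ and $\mathrm{diam}(G)$ its diameter. For a positive integer $t$, an interval $t$-coloring of a graph $G$ is a map assigning to each edge of $G$ a color from $\{1,2,\ldots,t\}$ such that every color $i\in\{1,\ldots,t\}$ is used on at least one edge, edges sharing a vertex receive distinct colors, and for each vertex $v$ the set of colors of edges incident to $v$ is an interval of consecutive integers. $\mathfrak{N}$ denotes the set of graphs that admit an interval $t$-coloring for some $t$, and for $G\in\mathfrak{N}$, $W(G)$ denotes the greatest $t$ for which $G$ has an interval $t$-coloring. *)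

From mathcomp Require Import all_boot.
Set Implicit Arguments. Unset Strict Implicit. Unset Printing Implicit Defensive.

Definition simple_graph (n : nat) (e : rel 'I_n) : Prop :=
  (forall x y, e x y = e y x) /\ (forall x, ~~ e x x).

Definition degree (n : nat) (e : rel 'I_n) (v : 'I_n) : nat := #|[set u | e v u]|.

Definition max_degree (n : nat) (e : rel 'I_n) : nat := \max_(v : 'I_n) degree e v.

Definition reach_within (n : nat) (e : rel 'I_n) (u v : 'I_n) (k : nat) : Prop :=
  exists p : seq 'I_n, [/\ size p <= k, path e u p & last u p = v].

Definition connected_graph (n : nat) (e : rel 'I_n) : Prop :=
  forall u v : 'I_n, exists k, reach_within e u v k.

Definition has_diam (n : nat) (e : rel 'I_n) (d : nat) : Prop :=
  (forall u v, reach_within e u v d) /\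
  (exists u v, forall k, reach_within e u v k -> d <= k).

Definition interval_coloring (n : nat) (e : rel 'I_n) (c : 'I_n -> 'I_n -> nat)
  (t : nat) : Prop :=
  [/\ (forall x y, e x y -> c x y = c y x),
      (forall x y, e x y -> 1 <= c x y <= t),
      (forall i, 1 <= i <= t -> exists x y, e x y /\ c x y = i),
      (forall x y z, e x y -> e x z -> y != z -> c x y != c x z) &
      (forall v a b k, (exists u, e v u /\ c v u = a) ->
                       (exists u, e v u /\ c v u = b) -> a <= k <= b ->
                       exists w, e v w /\ c v w = k)].

Definition interval_colorable (n : nat) (e : rel 'I_n) : Prop :=
  exists t c, @interval_coloring n e c t.

From mathcomp Require Import all_boot zify.

(* G is the Cartesian product of K_(2^q) with the path P_d: d copies of
   K_(2^q), consecutive copies joined by the perfect matching between equal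
   vertices.  Its diameter is d and its maximum degree is 2^q - 1, 2^q or
   2^q + 1 according as d = 1, d = 2 or d >= 3.  Doubling gives an interval
   colouring of K_(2^q) with 2^(q+1) - q - 2 colours in which the colours at
   x form an interval of length 2^q - 1 starting at kstart q x.  Shifting it
   by j * 2^q on copy j, and giving each matching edge the colour just above
   the colours at its lower endpoint, yields an interval colouring of G with
   2^(q+1) - q - 2 + (d - 1) * 2^q colours, which is the claimed bound. *)

Section Walks.
Variables (n : nat) (e : rel 'I_n).

Lemma reach_within_refl u : reach_within e u u 0.
Proof. by exists [::]. Qed.

Lemma reach_within_mono u v k k' :
  k <= k' -> reach_within e u v k -> reach_within e u v k'.
Proof. by move=> hk [p [hp ep lp]]; exists p; split => //; apply: leq_trans hk. Qed.

Lemma reach_within_rcons u v w k :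
  reach_within e u v k -> e v w -> reach_within e u w k.+1.
Proof.
move=> [p [hp ep lp]] evw; exists (rcons p w).
by rewrite size_rcons rcons_path ep lp evw last_rcons.
Qed.

Lemma reach_within_cat u v w k1 k2 :
  reach_within e u v k1 -> reach_within e v w k2 -> reach_within e u w (k1 + k2).
Proof.
move=> [p [hp ep lp]] [p' [hp' ep' lp']]; exists (p ++ p').
by rewrite size_cat leq_add // cat_path ep lp ep' last_cat lp.
Qed.

Lemma reach_within_sym u v k : symmetric e ->
  reach_within e u v k -> reach_within e v u k.
Proof.
move=> e_sym [p [hp ep <-]]; exists (rev (belast u p)); split.
- by rewrite size_rev size_belast.
- by rewrite rev_path (eq_path (e' := e)) // => x y; rewrite e_sym.
- by case: p {hp ep} => //= y p; rewrite rev_cons last_rcons.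
Qed.

Lemma reach_within_lipschitz (f : 'I_n -> nat) u v k :
  (forall x y, e x y -> f y <= (f x).+1) ->
  reach_within e u v k -> f v <= f u + k.
Proof.
move=> f_lip [p [hp ep <-]]; apply: leq_trans (leq_add (leqnn _) hp).
elim: p u ep {hp} => [|w p IH] u /=; first by rewrite addn0.
case/andP => euw /IH; have := f_lip _ _ euw; lia.
Qed.

End Walks.

Arguments reach_within_refl {n e}.
Arguments reach_within_mono {n e u v k k'}.
Arguments reach_within_rcons {n e u v w k}.
Arguments reach_within_cat {n e u v w k1 k2}.
Arguments reach_within_sym {n e u v k}.
Arguments reach_within_lipschitz {n e f u v k}.

(* An interval colouring of K_(2^(q+1)) from two copies of one of K_(2^q):
   the upper copy is shifted by 2^(q+1) - 1, the matching x -- x + 2^q gets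
   the colour just above the lower copy's colours at x, and every other
   cross edge x -- y + 2^q gets the colour of x -- y shifted by 2^q - 1. *)
Fixpoint kstart (q x : nat) : nat :=
  if q is q'.+1 then
    let h := 2 ^ q' in
    if x < h then kstart q' x else kstart q' (x - h) + h - 1
  else 1.

Fixpoint kcolor (q x y : nat) : nat :=
  if q is q'.+1 then
    let h := 2 ^ q' in
    let cross a b :=
      if a == b then kstart q' a + 2 * h - 2 else kcolor q' a b + h - 1 in
    if x < h then
      if y < h then kcolor q' x y else cross x (y - h)
    else if y < h then cross (x - h) y
    else kcolor q' (x - h) (y - h) + 2 * h - 1
  else 0.

Section CompleteGraphColoring.
Variable q : nat.
Local Notation h := (2 ^ q).

Lemma kstart_lo x : x < h -> kstart q.+1 x = kstart q x.
Proof. by move=> /= ->. Qed.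

Lemma kstart_hi x : h <= x -> kstart q.+1 x = kstart q (x - h) + h - 1.
Proof. by move=> /= hx; rewrite ltnNge hx. Qed.

Lemma kcolor_lolo x y : x < h -> y < h -> kcolor q.+1 x y = kcolor q x y.
Proof. by move=> /= -> ->. Qed.

Lemma kcolor_hihi x y : h <= x -> h <= y ->
  kcolor q.+1 x y = kcolor q (x - h) (y - h) + 2 * h - 1.
Proof. by move=> /= hx hy; rewrite ltnNge hx ltnNge hy. Qed.

Lemma kcolor_lohi x y : x < h -> h <= y ->
  kcolor q.+1 x y = if x == y - h then kstart q x + 2 * h - 2
                    else kcolor q x (y - h) + h - 1.
Proof. by move=> /= -> hy; rewrite ltnNge hy. Qed.

Lemma kcolor_hilo x y : h <= x -> y < h ->
  kcolor q.+1 x y = if x - h == y then kstart q (x - h) + 2 * h - 2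
                    else kcolor q (x - h) y + h - 1.
Proof. by move=> /= hx ->; rewrite ltnNge hx. Qed.

End CompleteGraphColoring.

Lemma kcolorC q x y : kcolor q x y = kcolor q y x.
Proof.
elim: q x y => [|q IH] x y //=.
case: ltnP => _; case: ltnP => _; rewrite 1?IH //;
  by rewrite eq_sym; case: eqP => [->|_]; rewrite 1?IH.
Qed.

Lemma kstart_bounds {q x} : x < 2 ^ q -> 1 <= kstart q x /\ kstart q x + q <= 2 ^ q.
Proof.
elim: q x => [|q IH] x; first by rewrite /= expn0; lia.
have h_gt0 : 0 < 2 ^ q by rewrite expn_gt0.
rewrite expnS => hx.
case: (ltnP x (2 ^ q)) => hxh.
  by rewrite kstart_lo //; have := IH x hxh; lia.
by rewrite kstart_hi //; have := IH (x - 2 ^ q); lia.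
Qed.

Lemma kstart_last q : kstart q (2 ^ q - 1) + q = 2 ^ q.
Proof.
elim: q => [|q IH] //.
have h_gt0 : 0 < 2 ^ q by rewrite expn_gt0.
rewrite expnS kstart_hi; last lia.
have -> : 2 * 2 ^ q - 1 - 2 ^ q = 2 ^ q - 1 by lia.
lia.
Qed.

Lemma kcolor_bounds {q x y} : x < 2 ^ q -> y < 2 ^ q -> x != y ->
  kstart q x <= kcolor q x y /\ kcolor q x y + 2 <= kstart q x + 2 ^ q.
Proof.
elim: q x y => [|q IH] x y; first by rewrite expn0; lia.
have h_gt0 : 0 < 2 ^ q by rewrite expn_gt0.
rewrite expnS => hx hy hxy.
case: (ltnP x (2 ^ q)) => hxh; case: (ltnP y (2 ^ q)) => hyh.
- by rewrite kcolor_lolo // kstart_lo //; have := IH x y hxh hyh hxy; lia.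
- rewrite kcolor_lohi // kstart_lo //; case: eqP => [|/eqP ne]; first lia.
  by have := IH x (y - 2 ^ q) hxh ltac:(lia) ne; lia.
- rewrite kcolor_hilo // kstart_hi //; case: eqP => [|/eqP ne]; first lia.
  by have := IH (x - 2 ^ q) y ltac:(lia) hyh ne; lia.
- rewrite kcolor_hihi // kstart_hi //.
  by have := IH (x - 2 ^ q) (y - 2 ^ q) ltac:(lia) ltac:(lia) ltac:(apply/eqP; lia); lia.
Qed.

Lemma kcolor_onto {q x} k : x < 2 ^ q ->
  kstart q x <= k -> k + 2 <= kstart q x + 2 ^ q ->
  exists y, [/\ y < 2 ^ q, y != x & kcolor q x y = k].
Proof.
elim: q x k => [|q IH] x k; first by rewrite /= expn0; lia.
have h_gt0 : 0 < 2 ^ q by rewrite expn_gt0.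
rewrite expnS => hx.
case: (ltnP x (2 ^ q)) => hxh.
- rewrite kstart_lo // => hk1 hk2.
  case: (leqP (k + 2) (kstart q x + 2 ^ q)) => hk3.
    have [y [hy hyx <-]] := IH x k hxh hk1 hk3.
    by exists y; rewrite kcolor_lolo //; split => //; lia.
  case: (leqP (k + 3) (kstart q x + 2 * 2 ^ q)) => hk4.
    have [y [hy hyx hc]] := IH x (k - (2 ^ q - 1)) hxh ltac:(lia) ltac:(lia).
    exists (y + 2 ^ q); split; [lia | apply/eqP; lia |].
    rewrite kcolor_lohi ?addnK; [|lia|lia].
    by rewrite eq_sym (negbTE hyx) hc; lia.
  exists (x + 2 ^ q); split; [lia | apply/eqP; lia |].
  by rewrite kcolor_lohi ?addnK ?eqxx; [lia|lia|lia].
- rewrite kstart_hi // => hk1 hk2.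
  case: (leqP (k + 2) (kstart q (x - 2 ^ q) + 2 * 2 ^ q - 1)) => hk3.
    have [y [hy hyx hc]] :=
      IH (x - 2 ^ q) (k - (2 ^ q - 1)) ltac:(lia) ltac:(lia) ltac:(lia).
    exists y; split; [lia | apply/eqP; lia |].
    by rewrite kcolor_hilo // eq_sym (negbTE hyx) hc; lia.
  case: (leqP (k + 1) (kstart q (x - 2 ^ q) + 2 * 2 ^ q - 1)) => hk4.
    exists (x - 2 ^ q); split; [lia | apply/eqP; lia |].
    by rewrite kcolor_hilo ?eqxx; [lia|lia|lia].
  have [y [hy hyx hc]] :=
    IH (x - 2 ^ q) (k - (2 * 2 ^ q - 1)) ltac:(lia) ltac:(lia) ltac:(lia).
  exists (y + 2 ^ q); split; [lia | apply/eqP; lia |].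
  by rewrite kcolor_hihi ?addnK ?hc; [lia|lia|lia].
Qed.

Lemma kcolor_cross_lo q x w : x < 2 ^ q -> 2 ^ q <= w < 2 * 2 ^ q ->
  kstart q x + 2 ^ q - 1 <= kcolor q.+1 x w /\
  (kcolor q.+1 x w = kstart q x + 2 * 2 ^ q - 2 -> w = x + 2 ^ q).
Proof.
have h_gt0 : 0 < 2 ^ q by rewrite expn_gt0.
move=> hx /andP [hw1 hw2]; rewrite kcolor_lohi //.
case: eqP => [|/eqP ne]; first lia.
by have := @kcolor_bounds q x (w - 2 ^ q) hx ltac:(lia) ne; lia.
Qed.

Lemma kcolor_cross_hi q x w : 2 ^ q <= x < 2 * 2 ^ q -> w < 2 ^ q ->
  kcolor q.+1 x w <= kstart q (x - 2 ^ q) + 2 * 2 ^ q - 2 /\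
  (kcolor q.+1 x w = kstart q (x - 2 ^ q) + 2 * 2 ^ q - 2 -> w = x - 2 ^ q).
Proof.
move=> /andP [hx1 hx2] hw; rewrite kcolor_hilo //.
case: eqP => [|/eqP ne]; first lia.
by have := @kcolor_bounds q (x - 2 ^ q) w ltac:(lia) hw ne; lia.
Qed.

Lemma kcolor_inj {q x y z} : x < 2 ^ q -> y < 2 ^ q -> z < 2 ^ q ->
  y != x -> z != x -> kcolor q x y = kcolor q x z -> y = z.
Proof.
elim: q x y z => [|q IH] x y z; first by rewrite expn0; lia.
have h_gt0 : 0 < 2 ^ q by rewrite expn_gt0.
rewrite expnS => hx hy hz hyx hzx.
case: (ltnP x (2 ^ q)) => hxh; case: (ltnP y (2 ^ q)) => hyh;
  case: (ltnP z (2 ^ q)) => hzh.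
- by rewrite !kcolor_lolo //; exact: IH.
- rewrite kcolor_lolo // => e.
  have := @kcolor_bounds q x y hxh hyh ltac:(by rewrite eq_sym).
  by have := @kcolor_cross_lo q x z hxh ltac:(lia); lia.
- rewrite [kcolor _ x z]kcolor_lolo // => e.
  have := @kcolor_bounds q x z hxh hzh ltac:(by rewrite eq_sym).
  by have := @kcolor_cross_lo q x y hxh ltac:(lia); lia.
- rewrite !kcolor_lohi //; case: eqP => e1; case: eqP => e2; try lia.
  + by have := @kcolor_bounds q x (z - 2 ^ q) hxh ltac:(lia) ltac:(apply/eqP; lia); lia.
  + by have := @kcolor_bounds q x (y - 2 ^ q) hxh ltac:(lia) ltac:(apply/eqP; lia); lia.
  + move=> e; have := IH x (y - 2 ^ q) (z - 2 ^ q) hxh ltac:(lia) ltac:(lia)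
      ltac:(apply/eqP; lia) ltac:(apply/eqP; lia) ltac:(lia); lia.
- rewrite !kcolor_hilo //; case: eqP => e1; case: eqP => e2; try lia.
  + by have := @kcolor_bounds q (x - 2 ^ q) z ltac:(lia) hzh ltac:(apply/eqP; lia); lia.
  + by have := @kcolor_bounds q (x - 2 ^ q) y ltac:(lia) hyh ltac:(apply/eqP; lia); lia.
  + move=> e; apply: (IH (x - 2 ^ q) y z); try lia; exact/eqP; lia.
- rewrite [kcolor _ x z]kcolor_hihi // => e.
  have := @kcolor_bounds q (x - 2 ^ q) (z - 2 ^ q) ltac:(lia) ltac:(lia) ltac:(apply/eqP; lia).
  by have := @kcolor_cross_hi q x y ltac:(lia) hyh; lia.
- rewrite [kcolor _ x y]kcolor_hihi // => e.
  have := @kcolor_bounds q (x - 2 ^ q) (y - 2 ^ q) ltac:(lia) ltac:(lia) ltac:(apply/eqP; lia).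
  by have := @kcolor_cross_hi q x z ltac:(lia) hzh; lia.
- rewrite !kcolor_hihi // => e.
  have := IH (x - 2 ^ q) (y - 2 ^ q) (z - 2 ^ q) ltac:(lia) ltac:(lia) ltac:(lia)
    ltac:(apply/eqP; lia) ltac:(apply/eqP; lia) ltac:(lia); lia.
Qed.

Lemma kcolor_cover {q i} : 1 <= i -> i + q + 2 <= 2 * 2 ^ q ->
  exists x, [/\ x < 2 ^ q, kstart q x <= i & i + 2 <= kstart q x + 2 ^ q].
Proof.
elim: q i => [|q IH] i; first by rewrite expn0; lia.
have h_gt0 : 0 < 2 ^ q by rewrite expn_gt0.
rewrite !expnS => hi1 hi2.
case: (leqP (i + q + 2) (2 * 2 ^ q)) => hi.
  by have [x [hx lo hi']] := IH i hi1 hi; exists x; rewrite kstart_lo //; split; lia.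
exists (2 * 2 ^ q - 1); rewrite kstart_hi; last lia.
have -> : 2 * 2 ^ q - 1 - 2 ^ q = 2 ^ q - 1 by lia.
by have := kstart_last q; split; lia.
Qed.

Definition layer (m u : nat) := u %/ m.
Definition column (m u : nat) := u %% m.

(* The Cartesian product K_m x P_d: vertex j * m + x is vertex x of the j-th
   copy of K_m, and copies j and j + 1 are joined by a perfect matching. *)
Definition prism_adj (m : nat) : rel nat := fun u v =>
  ((layer m u == layer m v) && (column m u != column m v)) ||
  ((column m u == column m v) &&
     ((layer m u == (layer m v).+1) || (layer m v == (layer m u).+1))).

Definition prism_vertex (N m j x : nat) : 'I_N.+1 := inord (j * m + x).

Definition prism_max_degree (d m : nat) :=
  if d == 1 then m - 1 else if d == 2 then m else m + 1.

Section Prism.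
Context {m d N : nat} (m_gt0 : 0 < m) (hN : N.+1 = d * m).
Local Notation e := (fun u v : 'I_N.+1 => prism_adj m u v).
Local Notation pv := (prism_vertex N m).

Lemma layer_lt (u : 'I_N.+1) : layer m u < d.
Proof. by rewrite /layer ltn_divLR // -hN. Qed.

Lemma column_lt (u : nat) : column m u < m.
Proof. by rewrite /column ltn_pmod. Qed.

Lemma layer_column_inj (u w : 'I_N.+1) :
  layer m u = layer m w -> column m u = column m w -> u = w.
Proof.
move=> hl hc; apply: val_inj => /=.
by rewrite (divn_eq u m) (divn_eq w m); move: hl hc; rewrite /layer /column => -> ->.
Qed.

Lemma layer_column_vertex {j x} : j < d -> x < m ->
  layer m (pv j x) = j /\ column m (pv j x) = x.
Proof.
move=> hj hx.
have hlt : j * m + x < N.+1.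
  by rewrite hN; apply: (@leq_trans (j.+1 * m)); [rewrite mulSn; lia | rewrite leq_mul2r hj orbT].
rewrite /prism_vertex /layer /column inordK //.
by rewrite divnMDl // divn_small // addn0 modnMDl modn_small.
Qed.

Lemma prism_vertexE (u : 'I_N.+1) : pv (layer m u) (column m u) = u.
Proof.
have [hl hc] := layer_column_vertex (layer_lt u) (column_lt u).
exact: layer_column_inj.
Qed.

Lemma prism_simple : simple_graph e.
Proof.
split => [x y|x] /=; rewrite /prism_adj.
- move: (layer m x) (layer m y) (column m x) (column m y) => a b c f.
  by rewrite (eq_sym b a) (eq_sym f c) (orbC (b == a.+1)).
- by rewrite !eqxx /=; apply/negP => /orP [] /eqP; lia.
Qed.

Lemma prism_adj_layer (v w : 'I_N.+1) : w != v -> layer m w = layer m v -> e v w.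
Proof.
move=> hne hl; rewrite /= /prism_adj hl eqxx /=; apply/orP; left.
by apply: contra hne => /eqP hc; apply/eqP/layer_column_inj.
Qed.

Lemma prism_adj_vertex_layer j x y : j < d -> x < m -> y < m -> x != y ->
  e (pv j x) (pv j y).
Proof.
move=> hj hx hy hxy; have [a1 a2] := layer_column_vertex hj hx.
have [b1 b2] := layer_column_vertex hj hy.
by rewrite /= /prism_adj a1 a2 b1 b2 eqxx hxy.
Qed.

Lemma reach_within_column_up j k x : x < m -> j + k < d ->
  reach_within e (pv j x) (pv (j + k) x) k.
Proof.
move=> hx; elim: k => [|k IH] hjk; first by rewrite addn0; apply: reach_within_refl.
rewrite addnS; apply: (@reach_within_rcons _ _ _ (pv (j + k) x)); first by apply: IH; lia.
have [a1 a2] := layer_column_vertex (j := j + k) ltac:(lia) hx.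
have [b1 b2] := layer_column_vertex (j := (j + k).+1) ltac:(lia) hx.
by rewrite /prism_adj a1 a2 b1 b2 !eqxx !orbT.
Qed.

Lemma reach_within_column {j j' x} : j < d -> j' < d -> x < m ->
  reach_within e (pv j x) (pv j' x) (d - 1).
Proof.
move=> hj hj' hx.
have e_sym : symmetric e by move=> u v; have [s _] := prism_simple; exact: s.
case: (leqP j j') => hjj.
  have := @reach_within_column_up j (j' - j) x hx ltac:(lia).
  by rewrite subnKC //; apply: reach_within_mono; lia.
have := @reach_within_column_up j' (j - j') x hx ltac:(lia).
rewrite subnKC; last lia.
by move/(reach_within_sym e_sym); apply: reach_within_mono; lia.
Qed.

Lemma prism_reach_within (u v : 'I_N.+1) : reach_within e u v d.
Proof.
set w := pv (layer m u) (column m v).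
have [w1 w2] := layer_column_vertex (layer_lt u) (column_lt v).
have uw : reach_within e u w 1.
  case: (eqVneq (column m u) (column m v)) => hc.
    rewrite (@layer_column_inj u w) ?w1 ?w2 //.
    exact: reach_within_mono _ (reach_within_refl _).
  by apply: reach_within_rcons (reach_within_refl _) _; rewrite /= /prism_adj w1 w2 eqxx hc.
have := reach_within_column (layer_lt u) (layer_lt v) (column_lt v).
rewrite prism_vertexE -/w => /(reach_within_cat uw).
by apply: reach_within_mono; lia.
Qed.

(* Walks change [layer + (column != 0)] by at most one per step, and this
   potential is 0 at vertex 0 of the first copy and d at vertex 1 of the last. *)
Lemma prism_far_pair : 1 < m -> 0 < d ->
  exists u v : 'I_N.+1, forall k, reach_within e u v k -> d <= k.
Proof.
move=> m_gt1 d_gt0.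
exists (pv 0 0), (pv (d - 1) 1) => k.
pose f (w : 'I_N.+1) := layer m w + (column m w != 0).
have f_lip x y : e x y -> f y <= (f x).+1.
  rewrite /= /prism_adj /f.
  case/orP => [/andP [/eqP -> _]|/andP [/eqP -> /orP [] /eqP ->]];
    by case: (column m y != 0); case: (column m x != 0); lia.
move/(reach_within_lipschitz f_lip); rewrite /f.
have [a1 a2] := layer_column_vertex d_gt0 m_gt0.
have [b1 b2] := layer_column_vertex (j := d - 1) (x := 1) ltac:(lia) m_gt1.
by rewrite a1 a2 b1 b2 /=; lia.
Qed.

Lemma card_layer j : j < d -> #|[set w : 'I_N.+1 | layer m w == j]| = m.
Proof.
move=> hj.
have -> : [set w : 'I_N.+1 | layer m w == j] = [set pv j (val y) | y : 'I_m].
  apply/setP => w; rewrite inE; apply/eqP/imsetP => [<-|[y _ ->]].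
    by exists (Ordinal (column_lt w)); rewrite ?prism_vertexE.
  by have [-> _] := layer_column_vertex hj (ltn_ord y).
rewrite card_imset ?card_ord // => y1 y2 h; apply: ord_inj.
have [_ <-] := layer_column_vertex hj (ltn_ord y1).
by have [_ <-] := layer_column_vertex hj (ltn_ord y2); rewrite h.
Qed.

Lemma card_layer_mates (v : 'I_N.+1) :
  #|[set w : 'I_N.+1 | layer m w == layer m v] :\ v| = m - 1.
Proof.
have := cardsD1 v [set w : 'I_N.+1 | layer m w == layer m v].
by rewrite card_layer ?layer_lt // inE eqxx add1n => hm; rewrite [in RHS]hm subn1.
Qed.

Lemma card_le1_coords (A : {set 'I_N.+1}) j x :
  (forall w, w \in A -> layer m w = j /\ column m w = x) -> #|A| <= 1.
Proof.
move=> hA; apply/card_le1_eqP => w1 w2 /hA [a1 a2] /hA [b1 b2].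
by apply: layer_column_inj; rewrite ?a1 ?a2 ?b1 ?b2.
Qed.

(* Besides its m - 1 mates in its layer, v has at most one neighbour in each
   adjacent layer. *)
Lemma prism_degree_le (v : 'I_N.+1) : degree e v <= prism_max_degree d m.
Proof.
set S := [set w : 'I_N.+1 | layer m w == layer m v] :\ v.
set A := [set w : 'I_N.+1 | (layer m w == (layer m v).+1) && (column m w == column m v)].
set B := [set w : 'I_N.+1 | (layer m v == (layer m w).+1) && (column m w == column m v)].
have sub : [set u | e v u] \subset S :|: (A :|: B).
  apply/subsetP => w; rewrite !inE /prism_adj.
  case/orP => [/andP [h1 h2]|/andP [h1 /orP [h2|h2]]].
  - rewrite (eq_sym (layer m w)) h1 andbT; apply/orP; left.
    by apply: contraNneq h2 => ->.
  - by rewrite h2 (eq_sym (column m w)) h1 /= !orbT.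
  - by rewrite h2 (eq_sym (column m w)) h1 /= !orbT.
have cardA : #|A| <= ((layer m v).+1 < d).
  case: ltnP => h.
    by apply: (@card_le1_coords _ (layer m v).+1 (column m v)) => w;
      rewrite inE => /andP [/eqP -> /eqP ->].
  rewrite leqn0 cards_eq0; apply/eqP/setP => w; rewrite !inE.
  by apply/negP => /andP [/eqP hw _]; have := layer_lt w; lia.
have cardB : #|B| <= (0 < layer m v).
  case: (posnP (layer m v)) => h.
    by rewrite leqn0 cards_eq0; apply/eqP/setP => w; rewrite !inE h.
  apply: (@card_le1_coords _ (layer m v).-1 (column m v)) => w.
  by rewrite inE => /andP [/eqP hw /eqP ->]; split => //; lia.
have := subset_leq_card sub.
have := (leq_card_setU S (A :|: B)).1; have := (leq_card_setU A B).1.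
rewrite /degree card_layer_mates /prism_max_degree; have := layer_lt v.
by case: eqP => [|_]; [|case: eqP => [|_]]; move: cardA cardB; lia.
Qed.

Lemma degree_ge_mates (v : 'I_N.+1) (X : {set 'I_N.+1}) :
  X \subset [set u | e v u] -> (forall w, w \in X -> layer m w != layer m v) ->
  #|X| + (m - 1) <= degree e v.
Proof.
move=> sXv hX; set M := [set w : 'I_N.+1 | layer m w == layer m v] :\ v.
have dXM : [disjoint X & M].
  by rewrite disjoints_subset; apply/subsetP => w /hX; rewrite !inE => /negbTE ->; rewrite andbF.
rewrite -(card_layer_mates v) -/M.
have /eqP <- : #|X :|: M| == #|X| + #|M| by rewrite (eq_leqif (leq_card_setU X M)).
apply: subset_leq_card; rewrite subUset sXv /=.
by apply/subsetP => w; rewrite !inE => /andP [hw /eqP hl]; exact: prism_adj_layer.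
Qed.

Lemma prism_degree_ge : 0 < d -> exists v : 'I_N.+1, prism_max_degree d m <= degree e v.
Proof.
move=> d_gt0; have [a1 a2] := layer_column_vertex d_gt0 m_gt0.
rewrite /prism_max_degree; case: eqP => [_|d_ne1].
  exists (pv 0 0); have := @degree_ge_mates (pv 0 0) set0 (sub0set _).
  by rewrite cards0; apply => w; rewrite inE.
have [b1 b2] := layer_column_vertex (j := 1) ltac:(lia) m_gt0.
case: eqP => [_|d_ne2].
  exists (pv 0 0); apply: leq_trans (@degree_ge_mates _ [set pv 1 0] _ _).
  - by rewrite cards1; lia.
  - by rewrite sub1set inE /= /prism_adj a1 a2 b1 b2 eqxx.
  - by move=> w; rewrite inE => /eqP ->; rewrite a1 b1.
have [c1 c2] := layer_column_vertex (j := 2) ltac:(lia) m_gt0.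
exists (pv 1 0); apply: leq_trans (@degree_ge_mates _ [set pv 0 0; pv 2 0] _ _).
- have ne02 : pv 0 0 != pv 2 0 by apply/eqP => h; move: a1; rewrite h c1.
  by rewrite cards2 ne02; lia.
- by rewrite subUset !sub1set !inE /= /prism_adj a1 a2 b1 b2 c1 c2 !eqxx !orbT.
- by move=> w; rewrite !inE => /orP [] /eqP ->; rewrite ?a1 ?b1 ?c1.
Qed.

Lemma prism_max_degreeE : 0 < d -> max_degree e = prism_max_degree d m.
Proof.
move=> d_gt0; apply/eqP; rewrite eqn_leq; apply/andP; split.
  by apply/bigmax_leqP => v _; apply: prism_degree_le.
have [v hv] := prism_degree_ge d_gt0; apply: leq_trans hv _.
exact: (leq_bigmax (F := fun v => degree e v) v).
Qed.

End Prism.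

(* The edge from vertex x of layer j up to layer j + 1 gets the colour just
   above those of x inside layer j, which is just below those inside layer
   j + 1; so at each vertex the inner colours are extended by at most one at
   either end. *)
Definition prism_color (q u v : nat) : nat :=
  let m := 2 ^ q in
  if layer m u == layer m v then kcolor q (column m u) (column m v) + layer m u * m
  else kstart q (column m u) + m - 1 + minn (layer m u) (layer m v) * m.

Definition prism_span (q d : nat) := 2 * 2 ^ q - q - 2 + (d - 1) * 2 ^ q.

Lemma prism_color_cases {q u v} : prism_adj (2 ^ q) u v ->
  let m := 2 ^ q in let j := layer m u in let x := column m u in
  [\/ [/\ layer m v = j, column m v != x & prism_color q u v = kcolor q x (column m v) + j * m],
       [/\ column m v = x, layer m v = j.+1 & prism_color q u v = kstart q x + m - 1 + j * m] |
       [/\ column m v = x, j = (layer m v).+1 & prism_color q u v = kstart q x + j * m - 1]].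
Proof.
have m_gt0 : 0 < 2 ^ q by rewrite expn_gt0.
have := @kstart_bounds q (column (2 ^ q) u) (column_lt m_gt0 _).
rewrite /prism_adj /prism_color /=.
move: (layer _ u) (layer _ v) (column _ u) (column _ v) => ju jv xu xv [s1 s2].
case/orP => [/andP [/eqP <- hx]|/andP [/eqP <- /orP [] /eqP ->]].
- by apply: Or31; rewrite eqxx eq_sym.
- apply: Or33; split => //.
  have -> : (jv.+1 == jv) = false by lia.
  have -> : minn jv.+1 jv = jv by lia.
  rewrite mulSn; lia.
- apply: Or32; split => //.
  have -> : (ju == ju.+1) = false by lia.
  by have -> : minn ju ju.+1 = ju by lia.
Qed.

Section PrismColoring.
Context {q d N : nat} (hN : N.+1 = d * 2 ^ q).
Local Notation m := (2 ^ q).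
Local Notation e := (fun u v : 'I_N.+1 => prism_adj m u v).
Local Notation c := (fun u v : 'I_N.+1 => prism_color q u v).

Let m_gt0 : 0 < m. Proof. by rewrite expn_gt0. Qed.

Lemma prism_color_bounds (v w : 'I_N.+1) : e v w ->
  let j := layer m v in let x := column m v in
  kstart q x + j * m <= (c v w).+1 /\ c v w + 1 <= kstart q x + j * m + m.
Proof.
move=> evw /=; have [s1 s2] := kstart_bounds (column_lt m_gt0 v).
case: (prism_color_cases evw) => [[_ hx ->]|[_ _ ->]|[_ _ ->]]; try lia.
by have := kcolor_bounds (column_lt m_gt0 v) (column_lt m_gt0 w) ltac:(by rewrite eq_sym); lia.
Qed.

Lemma layer_offset_le (v : 'I_N.+1) k : layer m v + k < d -> (layer m v + k) * m <= (d - 1) * m.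
Proof. by move=> h; rewrite leq_mul2r; apply/orP; right; lia. Qed.

Lemma prism_color_range (v w : 'I_N.+1) : e v w -> 1 <= c v w <= prism_span q d.
Proof.
move=> evw; have [s1 s2] := kstart_bounds (column_lt m_gt0 v).
have top := @layer_offset_le v 0; rewrite addn0 in top.
rewrite /prism_span; case: (prism_color_cases evw) => [[_ hx ->]|[_ hl ->]|[_ hl ->]].
- have := kcolor_bounds (column_lt m_gt0 v) (column_lt m_gt0 w) ltac:(by rewrite eq_sym).
  by have := top (layer_lt m_gt0 hN v); lia.
- have := @layer_offset_le v 1; rewrite mulnDl mul1n.
  by have := layer_lt m_gt0 hN w; rewrite hl addn1; lia.
- have : 1 * m <= layer m v * m by rewrite leq_mul2r hl orbT.
  by have := top (layer_lt m_gt0 hN v); lia.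
Qed.

Lemma prism_colorC (v w : 'I_N.+1) : e v w -> c v w = c w v.
Proof.
move=> evw; rewrite /prism_color /= [layer m w == _]eq_sym.
case: eqP => [<-|ne]; first by rewrite kcolorC.
by have [[hl _ _]|[-> _ _]|[-> _ _]] := prism_color_cases evw;
  [case: ne | rewrite minnC | rewrite minnC].
Qed.

Lemma prism_color_proper (v y z : 'I_N.+1) : e v y -> e v z -> y != z -> c v y != c v z.
Proof.
move=> evy evz; apply: contraNneq => cyz; apply/eqP.
have xv := column_lt m_gt0 v; have xy := column_lt m_gt0 y; have xz := column_lt m_gt0 z.
have [s1 s2] := kstart_bounds xv.
have [[a1 a2 a3]|[a1 a2 a3]|[a1 a2 a3]] := prism_color_cases evy;
have [[b1 b2 b3]|[b1 b2 b3]|[b1 b2 b3]] := prism_color_cases evz;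
  move: cyz; rewrite a3 b3 => cyz.
- apply: (layer_column_inj (m := m)); rewrite ?a1 ?b1 //.
  by apply: (kcolor_inj xv xy xz a2 b2); lia.
- by have := kcolor_bounds xv xy ltac:(by rewrite eq_sym); lia.
- by have := kcolor_bounds xv xy ltac:(by rewrite eq_sym); lia.
- by have := kcolor_bounds xv xz ltac:(by rewrite eq_sym); lia.
- by apply: (layer_column_inj (m := m)); rewrite ?a1 ?b1 ?a2 ?b2.
- have : 1 * m <= layer m v * m by rewrite leq_mul2r b2 orbT.
  lia.
- by have := kcolor_bounds xv xz ltac:(by rewrite eq_sym); lia.
- have : 1 * m <= layer m v * m by rewrite leq_mul2r a2 orbT.
  lia.
- by apply: (layer_column_inj (m := m)); lia.
Qed.

(* Strictly between two colours at v, a colour lies in the range of the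
   colouring of v's own layer, where kcolor_onto provides it. *)
Lemma prism_color_interval (v : 'I_N.+1) a b k :
  (exists u : 'I_N.+1, e v u /\ c v u = a) ->
  (exists u : 'I_N.+1, e v u /\ c v u = b) ->
  a <= k <= b -> exists w : 'I_N.+1, e v w /\ c v w = k.
Proof.
move=> [u1 [evu1 <-]] [u2 [evu2 <-]] hk.
case: (eqVneq k (c v u1)) => [->|hk1]; first by exists u1.
case: (eqVneq k (c v u2)) => [->|hk2]; first by exists u2.
have [lo _] := prism_color_bounds _ _ evu1; have [_ hi] := prism_color_bounds _ _ evu2.
have xv := column_lt m_gt0 v; have jv := layer_lt m_gt0 hN v.
have [y [hy hyx hc]] := kcolor_onto (k - layer m v * m) xv ltac:(lia) ltac:(lia).
have [c1 c2] := layer_column_vertex m_gt0 hN jv hy.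
exists (prism_vertex N m (layer m v) y); split.
  by rewrite -{1}(prism_vertexE m_gt0 hN v) (prism_adj_vertex_layer m_gt0 hN) // eq_sym.
by rewrite /prism_color /= c1 c2 eqxx hc; lia.
Qed.

Lemma prism_color_onto_first_layer i : 0 < d -> 1 <= i -> i + q + 2 <= 2 * m ->
  exists u v : 'I_N.+1, e u v /\ c u v = i.
Proof.
move=> d_gt0 i_gt0 hi.
have [x [hx lo hi']] := kcolor_cover i_gt0 hi.
have [y [hy hyx hc]] := kcolor_onto i hx lo hi'.
have [a1 a2] := layer_column_vertex m_gt0 hN d_gt0 hx.
have [b1 b2] := layer_column_vertex m_gt0 hN d_gt0 hy.
exists (prism_vertex N m 0 x), (prism_vertex N m 0 y); split.
  by apply: (prism_adj_vertex_layer m_gt0 hN); rewrite // eq_sym.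
by rewrite /prism_color /= a1 b1 a2 b2 eqxx hc mul0n addn0.
Qed.

(* kstart q (m - 1) = m - q, so the colours at the last vertex of layer j + 1
   run from 2m - q - 1 + j * m, on the edge down to layer j, to
   2m - q - 2 + (j + 1) * m. *)
Lemma prism_color_onto_upper_layer j r : j.+1 < d -> r < m ->
  exists u v : 'I_N.+1, e u v /\ c u v = 2 * m - q - 1 + j * m + r.
Proof.
move=> hj hr; have hl := kstart_last q; have x_lt : m - 1 < m by lia.
have [a1 a2] := layer_column_vertex m_gt0 hN (ltnW hj) x_lt.
have [b1 b2] := layer_column_vertex m_gt0 hN hj x_lt.
case: (posnP r) => [->|r_gt0].
  exists (prism_vertex N m j (m - 1)), (prism_vertex N m j.+1 (m - 1)); split.
    by rewrite /prism_adj a1 a2 b1 b2 !eqxx !orbT.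
  rewrite /prism_color /= a1 a2 b1 b2.
  have -> : (j == j.+1) = false by lia.
  have -> : minn j j.+1 = j by lia.
  lia.
have [y [hy hyx hc]] := kcolor_onto (r + m - q - 1) x_lt ltac:(lia) ltac:(lia).
have [c1 c2] := layer_column_vertex m_gt0 hN hj hy.
exists (prism_vertex N m j.+1 (m - 1)), (prism_vertex N m j.+1 y); split.
  by apply: (prism_adj_vertex_layer m_gt0 hN); rewrite // eq_sym.
by rewrite /prism_color /= b1 c1 b2 c2 eqxx hc mulSn; lia.
Qed.

Lemma prism_color_onto i : 0 < d -> 1 <= i <= prism_span q d ->
  exists u v : 'I_N.+1, e u v /\ c u v = i.
Proof.
move=> d_gt0 /andP [i_gt0 i_le]; rewrite /prism_span in i_le.
case: (leqP (i + q + 2) (2 * m)) => hi; first exact: prism_color_onto_first_layer.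
set r := i - (2 * m - q - 1).
have q_lt : q < m := ltn_expl q (ltnSn 1).
have r_lt : r < (d - 1) * m by rewrite /r; lia.
have -> : i = 2 * m - q - 1 + r %/ m * m + r %% m by rewrite -addnA -divn_eq /r; lia.
apply: prism_color_onto_upper_layer; last by rewrite ltn_mod.
by rewrite -ltn_divLR // in r_lt; lia.
Qed.

Lemma prism_interval_coloring : 0 < d -> interval_coloring e c (prism_span q d).
Proof.
move=> d_gt0; split.
- exact: prism_colorC.
- exact: prism_color_range.
- by move=> i; apply: prism_color_onto.
- exact: prism_color_proper.
- exact: prism_color_interval.
Qed.

End PrismColoring.

Theorem theorem5 (d q : nat) (hd : 0 < d) (hq : 0 < q) :
  exists (n : nat) (e : rel 'I_n),
    [/\ simple_graph e, connected_graph e, has_diam e d &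
        max_degree e = (if d == 1 then 2 ^ q - 1
                        else if d == 2 then 2 ^ q else 2 ^ q + 1) /\
        (interval_colorable e /\
        exists t c, interval_coloring e c t /\
          (if d == 1 then (d + 1) * (max_degree e - 1) + 2 <= t + q
           else if d == 2 then (d + 1) * (max_degree e - 1) + 1 <= t + q
           else (d + 1) * (max_degree e - 1) <= t + q + 2))].
Proof.
pose m := 2 ^ q; pose N := (d * m).-1.
have m_gt0 : 0 < m by rewrite expn_gt0.
have m_gt1 : 1 < m by rewrite -{1}(expn0 2) ltn_exp2l.
have hN : N.+1 = d * m by rewrite prednK // muln_gt0 hd.
exists N.+1, (fun u v : 'I_N.+1 => prism_adj m u v).
have reach := prism_reach_within m_gt0 hN.
rewrite (prism_max_degreeE m_gt0 hN hd); split => //.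
- exact: prism_simple m_gt0 hN.
- by move=> u v; exists d.
- by split => //; exact: prism_far_pair m_gt0 hN m_gt1 hd.
have col := prism_interval_coloring hN hd.
split => //; split; first by exists (prism_span q d), (fun u v : 'I_N.+1 => prism_color q u v).
exists (prism_span q d), (fun u v : 'I_N.+1 => prism_color q u v); split => //.
rewrite /prism_max_degree /prism_span -/m.
case: eqP => [->|d_ne1]; first by lia.
case: eqP => [->|d_ne2]; first by lia.
have -> : (d + 1) * (m + 1 - 1) = (d - 1) * m + 2 * m by rewrite addnK -mulnDl; congr (_ * _); lia.
lia.
Qed.
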